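(* Let $m>n>0$ be relatively prime integers with $(m,n)\neq(2,1)$, and $(r,s)\in\mathbb{Z}^2$. Then $(r,s)=\beta(m,n)$ if and only if $(-s,\,r+2s)=\beta(2m-n,\,m)$.
   Context: For relatively prime integers $a>b>0$, $\beta(a,b)$ denotes the Bézout coefficients given by the Euclidean algorithm: with $a=q_1b+r_1$, $b=q_2r_1+r_2$, $\dots$, $r_{k-2}=q_kr_{k-1}+r_k$, $r_{k-1}=1$, $r_k=0$ ($r_{-1}=a$, $r_0=b$), write $\begin{pmatrix}a\\ b\end{pmatrix}=M\begin{pmatrix}1\\0\end{pmatrix}$ with $M=\prod_{i=1}^k\begin{pmatrix}q_i&1\\1&0\end{pmatrix}$; then $\beta(a,b)$ is the first row of $M^{-1}$, and $\beta(a,b)=(r,s)$ satisfies $ra+sb=1$. *)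

From HB Require Import structures.
From mathcomp Require Import all_boot all_order all_algebra.
Set Implicit Arguments. Unset Strict Implicit. Unset Printing Implicit Defensive.
Import Order.TTheory GRing.Theory Num.Theory.
Local Open Scope ring_scope.

(* Quotients q_1, ..., q_k of the Euclidean algorithm on (a, b):
   a = q_1 b + r_1, b = q_2 r_1 + r_2, ..., stopping when the remainder is 0.
   The fuel argument [b] suffices since the second argument strictly decreases. *)
Fixpoint euclid_quots_fuel (fuel a b : nat) : seq nat :=
  match fuel with
  | 0%N => [::]
  | f.+1 => if b == 0%N then [::] else (a %/ b)%N :: euclid_quots_fuel f b (a %% b)
  end.

Definition euclid_quots (a b : nat) : seq nat := euclid_quots_fuel b a b.

Definition qmat (q : int) : 'M[int]_2 :=
  \matrix_(i < 2, j < 2)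
    if (i == 0) && (j == 0) then q
    else if (i == 0) || (j == 0) then 1 else 0.

Definition euclid_mat (a b : nat) : 'M[int]_2 :=
  \prod_(q <- euclid_quots a b) qmat q%:Z.

Definition beta (a b : nat) : int * int :=
  let Mi := invmx (euclid_mat a b) in (Mi 0 0, Mi 0 1).

From HB Require Import structures.
From mathcomp Require Import all_boot all_order all_algebra.
From mathcomp Require Import zify ring.
Import Order.TTheory GRing.Theory Num.Theory.
Local Open Scope ring_scope.

(* Put d = m - n, so (m, n) = (n + d, n) and (2m - n, m) = (n + 2d, n + d).
   On Euclid matrices, M(a + b, b) = E M(a, b) with E = [[1,1],[0,1]], and
   M(a, b) = J M(b, a) with J = [[0,1],[1,0]] when a < b.  Both M(2m - n, m)
   and M(m, n) therefore reduce to M(n, d) or M(d, n) (coprimality rules out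
   d = n), and the identities E J E = P E J and E J E J = P E give
   M(2m - n, m) = P M(m, n) with P = [[2,-1],[1,0]].  Hence the first row of
   M(2m - n, m)^-1 is (r, s) P^-1 = (r, s) [[0,1],[-1,2]] = (-s, r + 2s). *)

Lemma euclid_quots_fuel_enough f g a b : (b <= f)%N -> (b <= g)%N ->
  euclid_quots_fuel f a b = euclid_quots_fuel g a b.
Proof.
elim: f g a b => [|f IH] [|g] a b /=; rewrite ?leqn0.
- by [].
- by move=> /eqP ->.
- by move=> _ /eqP ->.
move=> b_le_f b_le_g; case: eqP => // /eqP; rewrite -lt0n => b_gt0.
by congr (_ :: _); apply: IH; have := ltn_pmod a b_gt0; lia.
Qed.

Lemma euclid_quots_cons a b : (0 < b)%N ->
  euclid_quots a b = (a %/ b)%N :: euclid_quots b (a %% b).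
Proof.
case: b => // b _; rewrite /euclid_quots /=; congr (_ :: _).
by apply: euclid_quots_fuel_enough => //; have := ltn_pmod a (ltn0Sn b); lia.
Qed.

Lemma euclid_mat_cons a b : (0 < b)%N ->
  euclid_mat a b = qmat (a %/ b)%N *m euclid_mat b (a %% b).
Proof. by move=> b_gt0; rewrite /euclid_mat euclid_quots_cons // big_cons mulmxE. Qed.

Definition mx22 (a b c d : int) : 'M[int]_2 :=
  \matrix_(i < 2, j < 2)
    if i == 0 then (if j == 0 then a else b) else (if j == 0 then c else d).

Definition shear_mx := mx22 1 1 0 1.
Definition dbl_sub_mx := mx22 2 (-1) 1 0.
Definition dbl_sub_mx_inv := mx22 0 1 (-1) 2.

Ltac mx22_ext := apply/matrixP; do 2 case=> [[|[|//]] ?];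
  unfold shear_mx, dbl_sub_mx, dbl_sub_mx_inv, mx22;
  repeat rewrite ?mxE ?big_ord_recl ?big_ord0 /=.

Lemma qmat_unit q : qmat q \in unitmx.
Proof.
have qmatK : qmat q *m mx22 0 1 1 (- q) = 1%:M by mx22_ext; ring.
by case: (mulmx1_unit qmatK).
Qed.

Lemma euclid_mat_unit a b : euclid_mat a b \in unitmx.
Proof.
apply: (big_ind (fun A : 'M[int]_2 => A \in unitmx)) => [|A B uA uB|q _].
- exact: unitmx1.
- by rewrite -mulmxE unitmx_mul uA uB.
- exact: qmat_unit.
Qed.

Lemma qmatD1 q : qmat (q + 1) = shear_mx *m qmat q.
Proof. by mx22_ext; ring. Qed.

Lemma euclid_mat_addl a b : (0 < b)%N ->
  euclid_mat (a + b) b = shear_mx *m euclid_mat a b.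
Proof.
move=> b_gt0; rewrite [LHS]euclid_mat_cons // [in RHS]euclid_mat_cons //.
by rewrite modnDr divnDr // divnn b_gt0 PoszD qmatD1 mulmxA.
Qed.

Lemma euclid_mat_swap a b : (a < b)%N ->
  euclid_mat a b = qmat 0 *m euclid_mat b a.
Proof.
move=> a_lt_b; have b_gt0 : (0 < b)%N by apply: leq_ltn_trans a_lt_b.
by rewrite euclid_mat_cons // divn_small // modn_small.
Qed.

Lemma euclid_mat_dbl_sub m n : (0 < n)%N -> (n < m)%N -> n.*2 != m ->
  euclid_mat (2 * m - n) m = dbl_sub_mx *m euclid_mat m n.
Proof.
move=> n_gt0 n_lt_m n2_neq_m; set d := (m - n)%N.
have d_gt0 : (0 < d)%N by rewrite subn_gt0.
have d_lt_m : (d < m)%N by rewrite /d; lia.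
have -> : (2 * m - n = d + m)%N by lia.
have m_eq : m = (n + d)%N by lia.
rewrite [in RHS]m_eq [(n + d)%N]addnC.
rewrite !euclid_mat_addl ?(ltn_trans n_gt0 n_lt_m) //.
rewrite euclid_mat_swap // m_eq euclid_mat_addl // !mulmxA.
have [d_lt_n|n_lt_d|d_eq_n] := ltngtP d n.
- rewrite [euclid_mat d n]euclid_mat_swap // !mulmxA; congr (_ *m _).
  by mx22_ext; ring.
- rewrite [euclid_mat n d]euclid_mat_swap // !mulmxA; congr (_ *m _).
  by mx22_ext; ring.
- by move: n2_neq_m; rewrite m_eq d_eq_n -addnn eqxx.
Qed.

Lemma invmx_dbl_sub (M : 'M[int]_2) : M \in unitmx ->
  invmx (dbl_sub_mx *m M) = invmx M *m dbl_sub_mx_inv.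
Proof.
move=> uM; have dbl_subK : dbl_sub_mx *m dbl_sub_mx_inv = 1%:M by mx22_ext; ring.
have uP := (mulmx1_unit dbl_subK).1.
have uPM : dbl_sub_mx *m M \in unitmx by rewrite unitmx_mul uP uM.
have PM_mulV : dbl_sub_mx *m M *m (invmx M *m dbl_sub_mx_inv) = 1%:M.
  by rewrite mulmxA -(mulmxA dbl_sub_mx) mulmxV // mulmx1 dbl_subK.
by rewrite -[LHS]mulmx1 -PM_mulV mulKmx.
Qed.

Lemma beta_dbl_sub a b a' b' :
  euclid_mat a' b' = dbl_sub_mx *m euclid_mat a b ->
  beta a' b' = (- (beta a b).2, (beta a b).1 + 2 * (beta a b).2).
Proof.
move=> M'_eq; rewrite /beta M'_eq invmx_dbl_sub ?euclid_mat_unit //.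
rewrite /dbl_sub_mx_inv /mx22 !mxE !big_ord_recl !big_ord0 !mxE /=.
have -> : lift ord0 ord0 = 1 :> 'I_2 by exact: val_inj.
have -> : ord0 = 0 :> 'I_2 by exact: val_inj.
by congr pair; ring.
Qed.

Theorem lemma2p7 (m n : nat) (r s : int) :
  (0 < n)%N -> (n < m)%N -> coprime m n -> (m, n) <> (2%N, 1%N) ->
  beta m n = (r, s) <-> beta (2 * m - n)%N m = (- s, r + 2 * s).
Proof.
move=> n_gt0 n_lt_m co_mn mn_neq.
have n2_neq_m : n.*2 != m.
  apply/eqP => m_eq; apply: mn_neq; move: co_mn.
  by rewrite -m_eq -mul2n coprimeMl /coprime gcdnn => /andP[_ /eqP ->].
rewrite (beta_dbl_sub _ _ _ _ (euclid_mat_dbl_sub _ _ n_gt0 n_lt_m n2_neq_m)).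
case: (beta m n) => u v /=; split => [[-> ->] // | [/oppr_inj v_eq]].
by rewrite v_eq => /addIr ->.
Qed.
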